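(* Let $g=\frac{\sqrt5-1}2$, $g\le\alpha\le\beta\le1$, $x\in[\alpha-1,\alpha)$, $z\in[\beta-1,\beta)$. (1) If $x=z$ or $(x+1)(1-z)=1$ or $(1-x)(z+1)=1$, then $T_\beta(z)-T_\alpha(x)\in\{0,1\}$. (2) If $x+z=0$ or $(x+1)(z+1)=1$, then $T_\alpha(x)+T_\beta(z)\in\{0,1\}$. (3) If $z-x=1$, then $(x+1)(T_\beta(z)+1)=1$. (4) If $x+z=1$, then $(T_\alpha(x)+1)(1-z)=1$ if $x>\frac1{\alpha+1}$; $(1-x)(T_\beta(z)+1)=1$ if $z>\frac1{\beta+1}$; and $(T_\alpha(x)+1)(T_\beta(z)+1)=1$ otherwise.
   Context: For $\alpha\in[\tfrac12,1]$, $T_\alpha:[\alpha-1,\alpha)\to[\alpha-1,\alpha)$ is $T_\alpha(x)=\frac1x-\lfloor\frac1x+1-\alpha\rfloor$ for $x\ne0$, $T_\alpha(0)=0$. *)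

From Stdlib Require Import Reals Lra.
Open Scope R_scope.

(* floor of a real number: up r is the unique integer with r < up r <= r + 1 *)
Definition Rfloor (r : R) : Z := (up r - 1)%Z.

Definition T (alpha x : R) : R :=
  if Req_EM_T x 0 then 0 else / x - IZR (Rfloor (/ x + 1 - alpha)).

Definition gold : R := (sqrt 5 - 1) / 2.

(* All four parts reduce to the observation that T_a(x) = 1/x - n where n is the
   integer with 1/x + 1 - a in [n, n+1), so that T_a(x) lies in [a-1, a).
   In (1) and (2) each relation makes 1/z - 1/x, resp. 1/z + 1/x, an integer;
   then T_b(z) - T_a(x), resp. T_a(x) + T_b(z), is an integer in (-1, 2), using
   0 <= b - a < 1, resp. 1 < a + b <= 2.  In (3) and (4) the constraints force
   the digit n to be 1, resp. 2, and the identities become algebraic; the digit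
   2 case rests on b(1 + a) >= g(1 + g) = 1 for a, b >= g. *)
From Stdlib Require Import Reals Lra Lia Psatz.
Open Scope R_scope.

Lemma Rfloor_spec r : IZR (Rfloor r) <= r < IZR (Rfloor r) + 1.
Proof. unfold Rfloor. rewrite minus_IZR. destruct (archimed r). simpl. lra. Qed.

Lemma Rfloor_unique r n : IZR n <= r < IZR n + 1 -> Rfloor r = n.
Proof.
  intros [h1 h2]. unfold Rfloor. rewrite <- (tech_up r (n + 1)).
  - lia.
  - rewrite plus_IZR; simpl; lra.
  - rewrite plus_IZR; simpl; lra.
Qed.

Lemma IZR_01 m : -1 < IZR m < 2 -> IZR m = 0 \/ IZR m = 1.
Proof.
  intros [h1 h2].
  assert (-1 < m)%Z by (apply lt_IZR; simpl; lra).
  assert (m < 2)%Z by (apply lt_IZR; simpl; lra).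
  assert (m = 0 \/ m = 1)%Z as [-> | ->] by lia; [left | right]; reflexivity.
Qed.

Lemma Rinv_sub_Rinv x z : x <> 0 -> z <> 0 -> / z - / x = (x - z) / (x * z).
Proof. intros; field; auto. Qed.

Lemma Rinv_add_Rinv x z : x <> 0 -> z <> 0 -> / x + / z = (x + z) / (x * z).
Proof. intros; field; auto. Qed.

Lemma Rinv_lt_mul c y : 0 < c -> / c < y -> 1 < y * c.
Proof. intros hc h. rewrite <- (Rinv_l c) by lra. apply Rmult_lt_compat_r; lra. Qed.

Lemma Rinv_ge_mul c y : 0 < c -> y <= / c -> y * c <= 1.
Proof. intros hc h. rewrite <- (Rinv_l c) by lra. apply Rmult_le_compat_r; lra. Qed.

Lemma gold_sqr_add : gold * gold + gold = 1.
Proof. unfold gold. assert (sqrt 5 * sqrt 5 = 5) by (apply sqrt_sqrt; lra). nra. Qed.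

Lemma gold_gt_half : 1 / 2 < gold.
Proof.
  unfold gold. assert (sqrt 5 * sqrt 5 = 5) by (apply sqrt_sqrt; lra).
  pose proof (sqrt_pos 5). nra.
Qed.

Lemma T_0 a : T a 0 = 0.
Proof. unfold T. destruct (Req_EM_T 0 0); [reflexivity | contradiction]. Qed.

Lemma T_neq0 a x : x <> 0 -> T a x = / x - IZR (Rfloor (/ x + 1 - a)).
Proof. intro h. unfold T. destruct (Req_EM_T x 0); [contradiction | reflexivity]. Qed.

Lemma T_range a x : x <> 0 -> a - 1 <= T a x < a.
Proof. intro h. rewrite T_neq0 by exact h. pose proof (Rfloor_spec (/ x + 1 - a)). lra. Qed.

Lemma T_digit a x n : 0 < x -> (IZR n - 1 + a) * x <= 1 < (IZR n + a) * x ->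
  T a x = / x - IZR n.
Proof.
  intros hx hn. assert (hinv : / x * x = 1) by (field; lra).
  rewrite T_neq0 by lra. rewrite (Rfloor_unique _ n); [reflexivity | nra].
Qed.

Lemma T_sub_T_01_of_Rinv a b x z k : 0 <= b - a < 1 -> x <> 0 -> z <> 0 ->
  / z - / x = IZR k -> T b z - T a x = 0 \/ T b z - T a x = 1.
Proof.
  intros hab hx hz e. pose proof (T_range a x hx). pose proof (T_range b z hz).
  assert (E : T b z - T a x = IZR (k + Rfloor (/ x + 1 - a) - Rfloor (/ z + 1 - b))).
  { rewrite (T_neq0 a x hx), (T_neq0 b z hz), minus_IZR, plus_IZR. lra. }
  rewrite E in *. apply IZR_01; lra.
Qed.

Lemma T_add_T_01_of_Rinv a b x z k : 1 < a + b <= 2 -> x <> 0 -> z <> 0 ->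
  / x + / z = IZR k -> T a x + T b z = 0 \/ T a x + T b z = 1.
Proof.
  intros hab hx hz e. pose proof (T_range a x hx). pose proof (T_range b z hz).
  assert (E : T a x + T b z = IZR (k - Rfloor (/ x + 1 - a) - Rfloor (/ z + 1 - b))).
  { rewrite (T_neq0 a x hx), (T_neq0 b z hz), !minus_IZR. lra. }
  rewrite E in *. apply IZR_01; lra.
Qed.

Lemma T_sub_T_01 a b x z : 0 <= b - a < 1 ->
  (x = z \/ (x + 1) * (1 - z) = 1 \/ (1 - x) * (z + 1) = 1) ->
  T b z - T a x = 0 \/ T b z - T a x = 1.
Proof.
  intros hab H. destruct (Req_dec x 0) as [x0 | x0].
  - assert (z = 0) by (subst x; destruct H as [| [|]]; nra).
    subst. rewrite !T_0. left; ring.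
  - assert (z0 : z <> 0) by (intro; subst z; destruct H as [| [|]]; nra).
    destruct H as [<- | [H | H]].
    + apply (T_sub_T_01_of_Rinv a b x x 0); auto. simpl; ring.
    + apply (T_sub_T_01_of_Rinv a b x z 1); auto.
      rewrite Rinv_sub_Rinv by auto.
      replace (x - z) with (x * z) by nra. simpl; field; auto.
    + apply (T_sub_T_01_of_Rinv a b x z (-1)); auto.
      rewrite Rinv_sub_Rinv by auto.
      replace (x - z) with (- (x * z)) by nra. simpl; field; auto.
Qed.

Lemma T_add_T_01 a b x z : 1 < a + b <= 2 ->
  (x + z = 0 \/ (x + 1) * (z + 1) = 1) ->
  T a x + T b z = 0 \/ T a x + T b z = 1.
Proof.
  intros hab H. destruct (Req_dec x 0) as [x0 | x0].
  - assert (z = 0) by (subst x; destruct H; nra).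
    subst. rewrite !T_0. left; ring.
  - assert (z0 : z <> 0) by (intro; subst z; destruct H; nra).
    destruct H as [H | H].
    + apply (T_add_T_01_of_Rinv a b x z 0); auto.
      rewrite Rinv_add_Rinv, H by auto. simpl; field; auto.
    + apply (T_add_T_01_of_Rinv a b x z (-1)); auto.
      rewrite Rinv_add_Rinv by auto.
      replace (x + z) with (- (x * z)) by nra. simpl; field; auto.
Qed.

Lemma mul_T_add1_digit1 a y : a <= 1 -> 0 < y < a -> 1 < y * (a + 1) ->
  y * (T a y + 1) = 1.
Proof.
  intros ha hy hay.
  rewrite (T_digit a y 1) by (simpl; nra). simpl. field; lra.
Qed.

Lemma digit2_bound a b y : gold <= a -> gold <= b ->
  b <= y * (b + 1) -> 1 - b < y -> 1 < y * (2 + a).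
Proof.
  intros ha hb h1 h2. pose proof gold_sqr_add. pose proof gold_gt_half.
  destruct (Rlt_or_le 1 (b + a * b)) as [hab | hab].
  - assert ((y * (b + 1) - b) * (2 + a) >= 0) by nra. nra.
  - assert (b <= gold) by nra.
    assert ((y - (1 - b)) * (2 + a) > 0) by nra. nra.
Qed.

Lemma mul_T_add1_digit2 a b x z : gold <= a -> gold <= b -> x + z = 1 ->
  x < a -> z < b -> x <= / (a + 1) -> z <= / (b + 1) ->
  (T a x + 1) * (T b z + 1) = 1.
Proof.
  intros ha hb hxz hxa hzb hx hz. pose proof gold_gt_half.
  apply Rinv_ge_mul in hx; [| lra]. apply Rinv_ge_mul in hz; [| lra].
  assert (hx2 : 1 < x * (2 + a)) by (apply (digit2_bound a b); nra).
  assert (hz2 : 1 < z * (2 + b)) by (apply (digit2_bound b a); nra).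
  assert (x0 : 0 < x) by nra. assert (z0 : 0 < z) by nra.
  rewrite (T_digit a x 2) by (simpl; nra).
  rewrite (T_digit b z 2) by (simpl; nra).
  replace z with (1 - x) by lra. simpl. field; lra.
Qed.

Theorem lemma4p2 (alpha beta x z : R)
  (hga : gold <= alpha) (hab : alpha <= beta) (hb1 : beta <= 1)
  (hx : alpha - 1 <= x < alpha) (hz : beta - 1 <= z < beta) :
  ((x = z \/ (x + 1) * (1 - z) = 1 \/ (1 - x) * (z + 1) = 1) ->
     (T beta z - T alpha x = 0 \/ T beta z - T alpha x = 1)) /\
  ((x + z = 0 \/ (x + 1) * (z + 1) = 1) ->
     (T alpha x + T beta z = 0 \/ T alpha x + T beta z = 1)) /\
  (z - x = 1 -> (x + 1) * (T beta z + 1) = 1) /\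
  (x + z = 1 ->
     (x > / (alpha + 1) -> (T alpha x + 1) * (1 - z) = 1) /\
     (z > / (beta + 1) -> (1 - x) * (T beta z + 1) = 1) /\
     (x <= / (alpha + 1) -> z <= / (beta + 1) ->
        (T alpha x + 1) * (T beta z + 1) = 1)).
Proof.
  pose proof gold_sqr_add. pose proof gold_gt_half.
  split; [| split; [| split]].
  - apply T_sub_T_01; lra.
  - apply T_add_T_01; lra.
  - intro hzx. replace (x + 1) with z by lra.
    apply mul_T_add1_digit1; [lra | lra |].
    (* z >= alpha and beta > alpha, so z (beta + 1) > alpha (alpha + 1) >= 1 *)
    nra.
  - intro hxz. split; [| split].
    + intro h. apply Rinv_lt_mul in h; [| lra].
      replace (1 - z) with x by lra. rewrite Rmult_comm.
      apply mul_T_add1_digit1; lra.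
    + intro h. apply Rinv_lt_mul in h; [| lra].
      replace (1 - x) with z by lra.
      apply mul_T_add1_digit1; lra.
    + apply mul_T_add1_digit2; lra.
Qed.
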